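(* Let $f\ge 1$ and $k\ge 3$ be integers and let there be $n=kf+1$ validators, each maintaining a local DAG as described in the context (Tusk setting). Let $p_i$ be a validator and $w$ a wave such that $DAG_i[\mathit{round}(w,2)]$ contains at least $(k-1)f+1$ vertices. Then there are at least $(k-2)f+1$ vertices $v\in DAG_i[\mathit{round}(w,1)]$ that satisfy the commit rule, i.e. for each of them at least $f+1$ vertices of $DAG_i[\mathit{round}(w,2)]$ have an edge to $v$.
   Context: Setting: $n=kf+1$ validators $p_1,\dots,p_n$, at most $f$ Byzantine. All local DAGs are subsets of one common set of vertices. Each vertex has a round number $r\ge1$ and a source validator; for each validator and round there is at most one vertex (no equivocation). Hence each round has at most $kf+1$ vertices. Every vertex of round $r\ge2$ has edges to $(k-1)f+1$ vertices of round $r-1$ with distinct sources. Each validator $p_i$ has a local DAG $DAG_i$, closed under edges; $DAG_i[r]$ is its set of round-$r$ vertices. Waves consist of 3 rounds, pipelined so that round 3 of wave $w$ is round 1 of wave $w+1$: $\mathit{round}(w,j)=2(w-1)+j$, $j=1,2,3$. Commit rule: a vertex $v$ of $\mathit{round}(w,1)$ satisfies the commit rule in $DAG_i$ if at least $f+1$ vertices of $DAG_i[\mathit{round}(w,2)]$ have an edge to $v$. *)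

From mathcomp Require Import all_boot.
Set Implicit Arguments. Unset Strict Implicit. Unset Printing Implicit Defensive.

(* Validators are 'I_n.  Since there is no equivocation, a vertex is
   identified by its pair (round, source). *)
Definition vertex (n : nat) := (nat * 'I_n)%type.

Definition round (w j : nat) : nat := 2 * (w - 1) + j.

(* Standing assumptions of the Tusk setting (context):
   - V is the common set of vertices, all local DAGs are subsets of V;
   - every vertex has round >= 1;
   - edges relate vertices of V;
   - every vertex of round r >= 2 has edges to (k-1)f+1 vertices of
     round r-1 (with distinct sources, automatic in this encoding);
   - each local DAG is a subset of V closed under edges. *)
Definition tusk_setting (k f : nat) (V : pred (vertex (k * f + 1)))
    (edge : rel (vertex (k * f + 1)))
    (DAG : 'I_(k * f + 1) -> pred (vertex (k * f + 1))) : Prop :=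
  [/\ (forall u, V u -> 1 <= u.1),
      (forall u v, edge u v -> V u /\ V v),
      (forall u, V u -> 2 <= u.1 ->
         #|[set j : 'I_(k * f + 1) | edge u (u.1.-1, j)]| = (k - 1) * f + 1),
      (forall i u, DAG i u -> V u) &
      (forall i u v, DAG i u -> edge u v -> DAG i v)].

Definition dag_round (n : nat) (D : pred (vertex n)) (r : nat) : {set 'I_n} :=
  [set j : 'I_n | D (r, j)].

Definition commit_rule (n f : nat) (edge : rel (vertex n)) (D : pred (vertex n))
    (w : nat) (v : vertex n) : bool :=
  f + 1 <= #|[set j in dag_round D (round w 2) | edge (round w 2, j) v]|.

(* Count the edges from the round-2 vertices of DAG_i to round 1 in two ways.
   Each of the s >= (k-1)f+1 round-2 vertices contributes (k-1)f+1 edges.  A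
   round-1 vertex that does not satisfy the commit rule receives at most f of
   them, and any vertex receives at most s.  If only c <= (k-2)f vertices
   satisfied the commit rule, then (as s >= f) the count would be at most
   (k-2)f s + (2f+1) f, which is less than s((k-1)f+1) because s >= 2f+1. *)

From mathcomp Require Import all_boot.
From mathcomp Require Import zify.

Set Implicit Arguments.
Unset Strict Implicit.
Unset Printing Implicit Defensive.

Section DoubleCounting.

Variables (A B : finType) (e : A -> B -> bool) (S : {set A}).

Lemma sum_card_out_in :
  \sum_(u in S) #|[set b | e u b]| = \sum_b #|[set u in S | e u b]|.
Proof.
transitivity (\sum_(u in S) \sum_b (e u b : nat)).
  apply: eq_bigr => u _; rewrite -sum1_card big_mkcond.
  by apply: eq_bigr => b _; rewrite inE.
rewrite exchange_big; apply: eq_bigr => b _.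
rewrite -sum1_card big_mkcond [RHS]big_mkcond.
by apply: eq_bigr => u _; rewrite inE; case: (u \in S).
Qed.

Definition heavy (t : nat) : {set B} := [set b | t < #|[set u in S | e u b]|].

Lemma card_heavy_double_count (d t : nat) :
  (forall u, u \in S -> #|[set b | e u b]| = d) ->
  #|S| * d <= #|heavy t| * #|S| + (#|B| - #|heavy t|) * t.
Proof.
move=> out_deg.
rewrite -sum_nat_const -(eq_bigr _ out_deg) sum_card_out_in (bigID [in heavy t]) /=.
apply: leq_add.
  rewrite -sum_nat_const; apply: leq_sum => b _.
  by apply: subset_leq_card; apply/subsetP => u; rewrite inE => /andP[].
rewrite -(cardsC (heavy t)) addKn -sum_nat_const.
rewrite (eq_bigl (fun b => b \notin heavy t) _ (fun b => in_setC b _)).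
by apply: leq_sum => b; rewrite inE -leqNgt.
Qed.

End DoubleCounting.

Lemma commit_bound_arith (k f s c : nat) :
  3 <= k -> (k - 1) * f + 1 <= s ->
  s * ((k - 1) * f + 1) <= c * s + (k * f + 1 - c) * f ->
  (k - 2) * f + 1 <= c.
Proof.
move=> k_ge3 s_ge hcount; rewrite leqNgt addn1 ltnS; apply/negP => few.
set m := (k - 2) * f in few.
have n_split : k * f + 1 = m + (2 * f + 1) by rewrite addnA -mulnDl subnK 1?ltnW.
have s_split : s * ((k - 1) * f + 1) = m * s + s * (f + 1).
  have -> : k - 1 = k - 2 + 1 by lia.
  by rewrite mulnDl mul1n -addnA mulnDr mulnC.
have two_f_lt_s : 2 * f < s.
  by apply: leq_trans s_ge; rewrite addn1 ltnS leq_mul2r; lia.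
have f_le_s : f <= s by apply: leq_trans (ltnW two_f_lt_s); rewrite leq_pmull.
have monotone_c : c * s + (k * f + 1 - c) * f <= m * s + (2 * f + 1) * f.
  rewrite n_split -addnBAC // mulnDl addnA leq_add2r -[m](subnKC few) mulnDl leq_add2l.
  by rewrite addKn leq_mul2l f_le_s orbT.
have : (2 * f + 1) * f < s * (f + 1).
  apply: (@leq_trans ((2 * f + 1) * (f + 1))).
    by rewrite ltn_mul2l !addn1 ltnSn andbT.
  by rewrite leq_mul2r !addn1 two_f_lt_s orbT.
lia.
Qed.

Section TuskSetting.

Variables (k f : nat) (V : pred (vertex (k * f + 1))) (edge : rel (vertex (k * f + 1))).
Variable (DAG : 'I_(k * f + 1) -> pred (vertex (k * f + 1))).
Hypothesis setting : tusk_setting V edge DAG.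

Lemma dag_out_degree i r u : 0 < r -> DAG i (r.+1, u) ->
  #|[set j | edge (r.+1, u) (r, j)]| = (k - 1) * f + 1.
Proof.
case: setting => _ _ out_deg in_V _ r_gt0 /in_V Vu.
exact: out_deg Vu r_gt0.
Qed.

Lemma commit_rule_in_dag i w v : commit_rule f edge (DAG i) w v -> DAG i v.
Proof.
case: setting => _ _ _ _ closed; rewrite /commit_rule addn1.
move/(leq_ltn_trans (leq0n f)); rewrite card_gt0 => /set0Pn[j].
rewrite !inE => /andP[Dj ej].
exact: closed Dj ej.
Qed.

End TuskSetting.

Theorem lemma4 (f k : nat) (V : pred (vertex (k * f + 1)))
    (edge : rel (vertex (k * f + 1)))
    (DAG : 'I_(k * f + 1) -> pred (vertex (k * f + 1)))
    (i : 'I_(k * f + 1)) (w : nat) :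
  1 <= f -> 3 <= k -> 1 <= w ->
  tusk_setting V edge DAG ->
  (k - 1) * f + 1 <= #|dag_round (DAG i) (round w 2)| ->
  (k - 2) * f + 1 <=
    #|[set j in dag_round (DAG i) (round w 1) |
        commit_rule f edge (DAG i) w (round w 1, j)]|.
Proof.
move=> _ k_ge3 _ setting big_round2.
set S := dag_round (DAG i) (round w 2).
have round2E : round w 2 = (round w 1).+1 by rewrite /round addnS.
pose e u j := edge (round w 2, u) (round w 1, j).
have committed : heavy e S f \subset [set j in dag_round (DAG i) (round w 1) |
                                          commit_rule f edge (DAG i) w (round w 1, j)].
  apply/subsetP => j; rewrite !inE -addn1 => hj.
  have committed_j : commit_rule f edge (DAG i) w (round w 1, j) := hj.
  by rewrite committed_j andbT (commit_rule_in_dag setting committed_j).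
apply: leq_trans (subset_leq_card committed).
have out_deg u : u \in S -> #|[set j | e u j]| = (k - 1) * f + 1.
  by rewrite inE /e round2E => /(dag_out_degree setting); apply; rewrite /round addn1.
apply: commit_bound_arith k_ge3 big_round2 _.
by have := card_heavy_double_count f out_deg; rewrite card_ord.
Qed.
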